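(* Let $n$ robots, at most $f$ of them Byzantine, be placed at two distinct points $A<B$ of the real line: $p\ge 1$ robots at $A$ and $q \ge 1$ robots at $B$, with $p+q=n$. Suppose the robots run a deterministic cautious algorithm that solves Byzantine convergence with up to $f$ Byzantine robots in the ATOM model under a fully asynchronous scheduler. If $|p-q|\le f$, then: - when a correct robot at $A$ is activated, its computed destination lies in $(A,B]$; - when a correct robot at $B$ is activated, its computed destination lies in $[A,B)$.
   Context: Model: robots on the real line in the ATOM model (each activated robot performs a full Look–Compute–Move cycle atomically). Robots are anonymous (same deterministic program), oblivious, have no common orientation, and have unlimited visibility with strong multiplicity detection (an observation returns the multiset of all positions). Byzantine robots behave arbitrarily, with positions chosen by the adversary. A fully asynchronous scheduler only guarantees that each robot is activated infinitely often. Byzantine convergence: for every $\epsilon>0$ there is a time after which all correct robots are pairwise within distance $\epsilon$. Cautious algorithm: every computed destination of a correct robot lies in the range of the correct robots' positions in its last observation. In addition, whenever the correct robots are not colocated, some correct robot later has destination different from its position. *)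

From HB Require Import structures.
From mathcomp Require Import all_boot all_order all_algebra.
From mathcomp Require Import reals.
Set Implicit Arguments. Unset Strict Implicit. Unset Printing Implicit Defensive.
Import Order.TTheory GRing.Theory Num.Theory.
Local Open Scope ring_scope.

Section Robots.
Variables (R : realType) (n : nat).

Definition config := 'I_n -> R.

(* Orientation of a robot's local frame (no common orientation):
   true = same as the global one, false = flipped. *)
Definition orient (s : bool) : R := if s then 1 else -1.

(* Local observation of robot i with orientation s: the multiset of all
   robot positions (correct and Byzantine, with multiplicities), expressed
   in i's local frame (origin at i, orientation s). The multiset is
   represented canonically as a sorted list. *)
Definition view (c : config) (i : 'I_n) (s : bool) : seq R :=
  sort <=%R [seq orient s * (c j - c i) | j <- enum 'I_n].

(* Deterministic, oblivious, anonymous algorithm: a map from local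
   observations to a local destination. *)
Definition algorithm := seq R -> R.

Definition dest (alg : algorithm) (c : config) (i : 'I_n) (s : bool) : R :=
  c i + orient s * alg (view c i s).

(* ATOM executions under a fully asynchronous (fair) scheduler.
   pos t = configuration at time t, act t = robots activated at round t
   (each performs an atomic Look-Compute-Move cycle on pos t),
   sg t i = orientation of robot i's frame at round t (adversarial).
   Byzantine robots (Byz) have arbitrary, adversary-chosen positions. *)
Definition execution (alg : algorithm) (Byz : {set 'I_n})
    (pos : nat -> config) (act : nat -> {set 'I_n})
    (sg : nat -> 'I_n -> bool) : Prop :=
  (forall t i, i \notin Byz ->
     pos t.+1 i = if i \in act t then dest alg (pos t) i (sg t i) else pos t i)
  /\ (forall i t, exists t', (t <= t')%N /\ i \in act t').

Definition converges (Byz : {set 'I_n}) (pos : nat -> config) : Prop :=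
  forall eps : R, 0 < eps -> exists T : nat, forall t : nat, (T <= t)%N ->
    forall i j, i \notin Byz -> j \notin Byz -> `|pos t i - pos t j| <= eps.

Definition solves_byz_convergence (alg : algorithm) (f : nat) : Prop :=
  forall (Byz : {set 'I_n}), (#|Byz| <= f)%N ->
  forall pos act sg, execution alg Byz pos act sg -> converges Byz pos.

Definition cautious (alg : algorithm) (f : nat) : Prop :=
  forall (Byz : {set 'I_n}), (#|Byz| <= f)%N ->
  forall pos act sg, execution alg Byz pos act sg ->
  (forall t i, i \notin Byz -> i \in act t ->
     exists j k, [/\ j \notin Byz, k \notin Byz &
       pos t j <= dest alg (pos t) i (sg t i) <= pos t k])
  /\ (forall t, (exists j k, [/\ j \notin Byz, k \notin Byz & pos t j != pos t k]) ->
       exists t' i, [/\ (t <= t')%N, i \notin Byz, i \in act t' &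
         dest alg (pos t') i (sg t' i) != pos t' i]).

End Robots.

From HB Require Import structures.
From mathcomp Require Import all_boot all_order all_algebra.
From mathcomp Require Import reals.
From mathcomp Require Import zify lra.
Set Implicit Arguments. Unset Strict Implicit. Unset Printing Implicit Defensive.
Import Order.TTheory GRing.Theory Num.Theory.
Local Open Scope ring_scope.

(* By caution the destination lies in [A, B]; it remains to show that the
   robot does not stay put.  If it did, then, by anonymity and obliviousness,
   every correct robot seeing p robots at its own position and q at the other
   point (at the same oriented distance) would stay.  Put min(p, q) correct
   robots at A, n - max(p, q) correct robots at B, and let the |p - q| <= f
   Byzantine robots in between jump back and forth between the two points, so
   that the robots at A, activated in even rounds, always see p robots at A,
   and the robots at B, activated in odd rounds with a flipped frame, always
   see p robots at B.  Both groups then have the forbidden view, so no correct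
   robot ever moves, contradicting convergence. *)

Lemma card_ord_lt (n k : nat) : (k <= n)%N -> #|[set j : 'I_n | (j < k)%N]| = k.
Proof.
move=> le_kn; rewrite -sum1_card (eq_bigl (fun j : 'I_n => (j < k)%N)) => [|j].
  by rewrite (big_ord_narrow le_kn) sum1_card card_ord.
by rewrite inE.
Qed.

Section Views.
Variables (R : realType) (n : nat).
Implicit Types (c : config R n) (alg : algorithm R) (i : 'I_n) (s : bool).

Lemma orientN s : orient R (~~ s) = - orient R s.
Proof. by case: s; rewrite /orient ?opprK. Qed.

Lemma orient_neq0 s : orient R s != 0.
Proof. by case: s; rewrite /orient ?oppr_eq0 oner_neq0. Qed.

Lemma dest_eq_self alg c i s : (dest alg c i s == c i) = (alg (view c i s) == 0).
Proof.
by rewrite -subr_eq0 /dest addrAC subrr add0r mulf_eq0 (negbTE (orient_neq0 s)).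
Qed.

Definition split_view (p q : nat) (d : R) : seq R := sort <=%R (nseq p 0 ++ nseq q d).

Lemma view_two_points c i s (a b : R) (p q : nat) :
  a != b -> c i = a -> (forall j, c j = a \/ c j = b) ->
  #|[set j | c j == a]| = p -> #|[set j | c j == b]| = q ->
  view c i s = split_view p q (orient R s * (b - a)).
Proof.
move=> neq_ab ci_a c_ab card_a card_b; rewrite /view ci_a.
apply/perm_sort_leP/permP => pr; rewrite count_map count_cat !count_nseq.
pose at_a j := (c j == a) && pr 0.
pose at_b j := (c j == b) && pr (orient R s * (b - a)).
have count_and (x : R) (bb : bool) :
    count (fun j => (c j == x) && bb) (enum 'I_n) = (bb * #|[set j | c j == x]|)%N.
  rewrite cardE enumT /enum_mem size_filter.
  case: bb; last by rewrite mul0n (@eq_count _ _ pred0) ?count_pred0 // => j; rewrite andbF.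
  by rewrite mul1n; apply: eq_count => j; rewrite andbT /= inE.
have disjoint_ab : count (predI at_a at_b) (enum 'I_n) = 0%N.
  rewrite (@eq_count _ _ pred0) ?count_pred0 // => j.
  by rewrite /= /at_a /at_b; case: eqP => //= ->; rewrite (negbTE neq_ab) andbF.
have -> : count (preim (fun j => orient R s * (c j - a)) pr) (enum 'I_n) =
          count (predU at_a at_b) (enum 'I_n).
  apply: eq_count => j; rewrite /= /at_a /at_b.
  case: (c_ab j) => ->; rewrite ?subrr ?mulr0 eqxx /=.
    by rewrite (negbTE neq_ab) orbF.
  by rewrite eq_sym (negbTE neq_ab).
have := count_predUI at_a at_b (enum 'I_n).
by rewrite disjoint_ab addn0 /at_a /at_b !count_and card_a card_b.
Qed.

End Views.

Lemma separated_not_converges (R : realType) (n : nat) (Byz : {set 'I_n})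
    (pos : nat -> config R n) (i j : 'I_n) (a b : R) :
  i \notin Byz -> j \notin Byz -> a != b ->
  (forall t, pos t i = a) -> (forall t, pos t j = b) -> ~ converges Byz pos.
Proof.
move=> i_ok j_ok neq_ab pos_i pos_j conv.
have dist_gt0 : 0 < `|a - b| by rewrite normr_gt0 subr_eq0.
have [T sep] := conv (`|a - b| / 2) ltac:(lra).
by have := sep T (leqnn T) i j i_ok j_ok; rewrite pos_i pos_j; lra.
Qed.

Section SplitConfig.
Variables (R : realType) (n : nat) (a b : R).
Hypothesis neq_ab : a != b.

Definition split_config (k : nat) : config R n := fun j => if (j < k)%N then a else b.

Lemma view_split_config (k : nat) (i : 'I_n) (s : bool) : (k <= n)%N ->
  view (split_config k) i s =
  if (i < k)%N then split_view k (n - k) (orient R s * (b - a))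
  else split_view (n - k) k (orient R s * (a - b)).
Proof.
move=> le_kn.
have at_a : [set j | split_config k j == a] = [set j : 'I_n | (j < k)%N].
  apply/setP => j; rewrite !inE /split_config.
  by case: ifP; rewrite ?eqxx // eq_sym (negbTE neq_ab).
have at_b : [set j | split_config k j == b] = ~: [set j : 'I_n | (j < k)%N].
  apply/setP => j; rewrite !inE /split_config.
  by case: ifP; rewrite ?eqxx // (negbTE neq_ab).
have card_a : #|[set j | split_config k j == a]| = k by rewrite at_a card_ord_lt.
have card_b : #|[set j | split_config k j == b]| = (n - k)%N.
  by rewrite at_b cardsCs setCK card_ord card_ord_lt.
have two_points j : split_config k j = a \/ split_config k j = b.
  by rewrite /split_config; case: ifP; [left | right].
case: ifP => i_k.
  by apply: view_two_points card_a card_b => //; rewrite /split_config i_k.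
apply: view_two_points card_b card_a; first by rewrite eq_sym.
  by rewrite /split_config i_k.
by move=> j; case: (two_points j); [right | left].
Qed.

End SplitConfig.

Section Oscillation.
Variables (R : realType) (n f : nat) (alg : algorithm R) (a b : R) (P Q : nat) (s : bool).
Hypotheses (neq_ab : a != b) (P_gt0 : (0 < P)%N) (Q_gt0 : (0 < Q)%N).
Hypotheses (PQ_n : (P + Q)%N = n) (PQ_f : (P - Q <= f)%N) (QP_f : (Q - P <= f)%N).

Let m := minn P Q.
Let M := maxn P Q.
Let Byz := [set j : 'I_n | (j < M)%N] :\: [set j : 'I_n | (j < m)%N].
Let pos (t : nat) : config R n := split_config a b (if odd t then Q else P).
Let act (t : nat) :=
  if odd t then ~: [set j : 'I_n | (j < m)%N] else [set j : 'I_n | (j < m)%N].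
Let sg (t : nat) (j : 'I_n) := if odd t then ~~ s else s.

Lemma oscillation_byz_card : (#|Byz| <= f)%N.
Proof.
rewrite cardsDS ?card_ord_lt /m /M; try lia.
by apply/subsetP => j; rewrite !inE; lia.
Qed.

Lemma notin_oscillation_byz (i : 'I_n) : (i \notin Byz) = (i < m)%N || (M <= i)%N.
Proof. by rewrite !inE /m /M; lia. Qed.

Lemma oscillation_correct_pos t (i : 'I_n) :
  i \notin Byz -> pos t i = split_config a b P i.
Proof.
rewrite notin_oscillation_byz /pos /split_config => i_ok; case: (odd t) => //.
by have -> : (i < Q)%N = (i < P)%N by move: i_ok; rewrite /m /M; lia.
Qed.

Lemma oscillation_view t (i : 'I_n) : i \notin Byz -> i \in act t ->
  view (pos t) i (sg t i) = split_view P Q (orient R s * (b - a)).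
Proof.
rewrite notin_oscillation_byz /act /pos /sg; case: (odd t); rewrite !inE => i_ok i_act.
  rewrite view_split_config //; last by lia.
  have -> : (i < Q)%N = false by move: i_ok i_act; rewrite /m /M; lia.
  by rewrite orientN mulNr -mulrN opprB (_ : (n - Q = P)%N) //; lia.
rewrite view_split_config //; last by lia.
have -> : (i < P)%N by move: i_act; rewrite /m; lia.
by rewrite (_ : (n - P = Q)%N) //; lia.
Qed.

Hypothesis stay : alg (split_view P Q (orient R s * (b - a))) = 0.

Lemma oscillation_execution : execution alg Byz pos act sg.
Proof.
split=> [t i i_ok | i t].
  rewrite !oscillation_correct_pos //; case: ifP => // i_act; apply/esym/eqP.
  by rewrite -(oscillation_correct_pos t) // dest_eq_self oscillation_view // stay.
case: (ltnP i m) => i_m.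
  by exists (2 * t)%N; rewrite /act oddM inE; split; first lia.
by exists (2 * t).+1; rewrite /act oddS oddM !inE -leqNgt; split; first lia.
Qed.

Lemma oscillation_not_converges : ~ converges Byz pos.
Proof.
have lo : (0 < n)%N by lia.
have hi : (n.-1 < n)%N by lia.
have lo_ok : Ordinal lo \notin Byz by rewrite notin_oscillation_byz /m /=; lia.
have hi_ok : Ordinal hi \notin Byz by rewrite notin_oscillation_byz /M /=; lia.
apply: (separated_not_converges lo_ok hi_ok neq_ab) => t.
  by rewrite oscillation_correct_pos // /split_config /= P_gt0.
rewrite oscillation_correct_pos // /split_config /=.
by have -> : (n.-1 < P)%N = false by lia.
Qed.

End Oscillation.

Lemma split_view_unstable (R : realType) (n f : nat) (alg : algorithm R)
    (a b : R) (P Q : nat) (s : bool) :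
  solves_byz_convergence n alg f -> a != b -> (0 < P)%N -> (0 < Q)%N ->
  (P + Q)%N = n -> (P - Q <= f)%N -> (Q - P <= f)%N ->
  alg (split_view P Q (orient R s * (b - a))) != 0.
Proof.
move=> solves neq_ab P_gt0 Q_gt0 PQ_n PQ_f QP_f; apply/eqP => stay.
have byz_f := oscillation_byz_card neq_ab P_gt0 Q_gt0 PQ_n PQ_f QP_f.
have exec := oscillation_execution neq_ab P_gt0 Q_gt0 PQ_n PQ_f QP_f stay.
apply: (oscillation_not_converges neq_ab P_gt0 Q_gt0 PQ_n PQ_f QP_f).
exact: solves byz_f _ _ _ exec.
Qed.

Lemma two_point_dest_neq (R : realType) (n f : nat) (alg : algorithm R)
    (c : config R n) (i : 'I_n) (s : bool) (a b : R) (p q : nat) :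
  solves_byz_convergence n alg f -> a != b -> (0 < p)%N -> (0 < q)%N ->
  (p + q)%N = n -> (p - q <= f)%N -> (q - p <= f)%N ->
  c i = a -> (forall j, c j = a \/ c j = b) ->
  #|[set j | c j == a]| = p -> #|[set j | c j == b]| = q ->
  dest alg c i s != a.
Proof.
move=> solves neq_ab p_gt0 q_gt0 pq_n pq_f qp_f ci_a c_ab card_a card_b.
rewrite -ci_a dest_eq_self (view_two_points _ neq_ab ci_a c_ab card_a card_b).
exact: (split_view_unstable _ solves neq_ab p_gt0 q_gt0 pq_n pq_f qp_f).
Qed.

Lemma cautious_dest_between (R : realType) (n f : nat) (alg : algorithm R)
    (Byz : {set 'I_n}) pos act sg (t : nat) (i : 'I_n) (lo hi : R) :
  cautious n alg f -> (#|Byz| <= f)%N -> execution alg Byz pos act sg ->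
  (forall j, j \notin Byz -> lo <= pos t j <= hi) ->
  i \notin Byz -> i \in act t -> lo <= dest alg (pos t) i (sg t i) <= hi.
Proof.
move=> caut byz_f exec hull i_ok i_act.
have [j [k [j_ok k_ok /andP[le_j le_k]]]] :=
  (caut Byz byz_f pos act sg exec).1 t i i_ok i_act.
have /andP[lo_j _] := hull j j_ok; have /andP[_ k_hi] := hull k k_ok.
by rewrite (le_trans lo_j le_j) (le_trans le_k k_hi).
Qed.

Theorem lemma5 (R : realType) (n f : nat) (alg : algorithm R) :
  cautious n alg f -> solves_byz_convergence n alg f ->
  forall (A B : R) (p q : nat), A < B -> (1 <= p)%N -> (1 <= q)%N ->
  (p + q)%N = n -> (p - q <= f)%N -> (q - p <= f)%N ->
  forall (Byz : {set 'I_n}), (#|Byz| <= f)%N ->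
  forall pos act sg, execution alg Byz pos act sg ->
  forall t : nat,
    #|[set i | pos t i == A]| = p -> #|[set i | pos t i == B]| = q ->
    (forall i, pos t i = A \/ pos t i = B) ->
  forall i, i \notin Byz -> i \in act t ->
    (pos t i = A -> A < dest alg (pos t) i (sg t i) <= B) /\
    (pos t i = B -> A <= dest alg (pos t) i (sg t i) < B).
Proof.
move=> caut solves A B p q lt_AB p_gt0 q_gt0 pq_n pq_f qp_f Byz byz_f pos act sg exec
  t card_A card_B two_pts i i_ok i_act.
have /andP[A_le B_ge] : A <= dest alg (pos t) i (sg t i) <= B.
  apply: (cautious_dest_between caut byz_f exec) => // j _.
  by case: (two_pts j) => ->; rewrite lexx (ltW lt_AB).
have neq_AB : A != B by rewrite lt_eqF.
split=> pos_i; rewrite lt_neqAle A_le B_ge ?andbT.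
  by rewrite eq_sym (two_point_dest_neq _ solves neq_AB p_gt0 q_gt0 pq_n pq_f qp_f).
rewrite (two_point_dest_neq _ solves _ q_gt0 p_gt0 _ qp_f pq_f pos_i _ card_B card_A) //.
- by rewrite eq_sym.
- by rewrite addnC.
by move=> j; case: (two_pts j); [right | left].
Qed.
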